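(* Let $\kappa$ be an uncountable regular cardinal, let $\mathcal{I}$ be a $\kappa$-complete proper ideal on $\kappa$ containing every bounded subset of $\kappa$, and let $\nu\in\{2,\kappa\}$. Then the space ${}^{\kappa}\nu\times{}^{\kappa}\kappa$ with the product topology $\tau_{\mathcal{I}}\times\tau_{\mathcal{I}}$ is homeomorphic to $({}^{\kappa}\kappa,\tau_{\mathcal{I}})$.
   Context: For $\mu\in\{2,\kappa\}$, ${}^{\kappa}\mu$ is the set of functions $\kappa\to\mu$; for $f\colon D\to\mu$ with $D\in\mathcal{I}$, $\mathbf{N}_f=\{x\in{}^{\kappa}\mu: f\subseteq x\}$, and $\tau_{\mathcal{I}}$ on ${}^{\kappa}\mu$ is the topology generated by these sets. *)

From HB Require Import structures.
From mathcomp Require Import all_boot.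
From mathcomp Require Import boolp classical_sets functions cardinality.
Set Implicit Arguments.
Unset Strict Implicit.
Unset Printing Implicit Defensive.
Local Open Scope classical_set_scope.
Local Open Scope card_scope.

(** * The cardinal kappa, presented as a well-ordered type (K, lt) *)

Definition strict_well_order (K : Type) (lt : K -> K -> Prop) : Prop :=
  [/\ (forall x, ~ lt x x),
      (forall x y z, lt x y -> lt y z -> lt x z),
      (forall x y, [\/ lt x y, x = y | lt y x]) &
      well_founded lt].

(* the order type of (K, lt) is a cardinal (an initial ordinal):
   no proper initial segment has the cardinality of K *)
Definition initial_ordinal (K : Type) (lt : K -> K -> Prop) : Prop :=
  forall x : K, ~ ([set: K] #<= [set y | lt y x]).

Definition small (K T : Type) (A : set T) : Prop := ~ ([set: K] #<= A).

Definition bounded (K : Type) (lt : K -> K -> Prop) (A : set K) : Prop :=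
  exists x, forall y, A y -> lt y x.

Definition regular (K : Type) (lt : K -> K -> Prop) : Prop :=
  forall A : set K, small K A -> bounded lt A.

Definition uncountable_type (K : Type) : Prop := ~ ([set: K] #<= [set: nat]).

Definition uncountable_regular_cardinal (K : Type) (lt : K -> K -> Prop) :=
  [/\ strict_well_order lt, initial_ordinal lt, regular lt & uncountable_type K].

Definition ideal (K : Type) (I : set (set K)) : Prop :=
  [/\ I set0,
      (forall A B, B `<=` A -> I A -> I B) &
      (forall A B, I A -> I B -> I (A `|` B))].

Definition proper_ideal (K : Type) (I : set (set K)) : Prop :=
  ideal I /\ ~ I [set: K].

Definition kappa_complete (K : Type) (I : set (set K)) : Prop :=
  forall Fam : set (set K), Fam `<=` I -> small K Fam -> I (\bigcup_(A in Fam) A).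

Definition contains_bounded (K : Type) (lt : K -> K -> Prop) (I : set (set K)) :=
  forall A : set K, bounded lt A -> I A.

Definition is_topology (X : Type) (O : set (set X)) : Prop :=
  [/\ O setT,
      (forall U V, O U -> O V -> O (U `&` V)) &
      (forall F : set (set X), F `<=` O -> O (\bigcup_(U in F) U))].

Definition generated_topology (X : Type) (S : set (set X)) : set (set X) :=
  [set U | forall O : set (set X), is_topology O -> S `<=` O -> O U].

(* N_f for f : D -> mu with D in I, f given as the restriction of g to D *)
Definition Nset (K mu : Type) (D : set K) (g : K -> mu) : set (K -> mu) :=
  [set x | forall a, D a -> x a = g a].

Definition tauI_basic (K mu : Type) (I : set (set K)) : set (set (K -> mu)) :=
  [set N | exists (D : set K) (g : K -> mu), I D /\ N = Nset D g].

Definition tauI (K mu : Type) (I : set (set K)) : set (set (K -> mu)) :=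
  generated_topology (@tauI_basic K mu I).

Definition product_topology (X Y : Type) (OX : set (set X)) (OY : set (set Y))
  : set (set (X * Y)) :=
  generated_topology [set W | exists U V, [/\ OX U, OY V & W = U `*` V]].

Definition continuous_wrt (X Y : Type) (OX : set (set X)) (OY : set (set Y))
  (f : X -> Y) : Prop :=
  forall V, OY V -> OX (f @^-1` V).

Definition homeomorphic (X Y : Type) (OX : set (set X)) (OY : set (set Y)) :=
  exists (f : X -> Y) (g : Y -> X),
    [/\ cancel f g, cancel g f, continuous_wrt OX OY f & continuous_wrt OY OX g].

Arguments tauI {K} mu I.
Arguments tauI_basic {K} mu I.

(* Pointwise, a function K -> A * B is a pair of functions K -> A and K -> B,
   and this identification is a homeomorphism between tau_I x tau_I and tau_I
   for every family I.  It therefore suffices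
   to have bijections bool * K ~ K and K * K ~ K.  The latter is Hessenberg's
   theorem: K * K, well-ordered by Goedel's order (first by the maximum, then
   lexicographically), has all its proper initial segments inside squares of
   closed segments, which by induction are smaller than K; so a greedy
   transfinite recursion along Goedel's order injects K * K into K. *)

From HB Require Import structures.
From mathcomp Require Import all_boot.
From mathcomp Require Import boolp classical_sets functions cardinality.
Set Implicit Arguments. Unset Strict Implicit. Unset Printing Implicit Defensive.
Local Open Scope classical_set_scope.
Local Open Scope card_scope.

Lemma card_le_injon T U (A : set T) (B : set U) (f : T -> U) :
  set_fun A B f -> set_inj A f -> A #<= B.
Proof.
move=> fAB finj; have [g] : $|{injfun A >-> B}| by apply/injfunPex; exists f.
exact: inj_card_le g.
Qed.
Arguments card_le_injon {T U A B} f.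

Lemma card_le_setX T T' U U' (A : set T) (A' : set T') (B : set U) (B' : set U') :
  A #<= B -> A' #<= B' -> A `*` A' #<= B `*` B'.
Proof.
elim/Ppointed: U => U in B *.
  by rewrite empty_eq0 => /card_le0P-> _; rewrite set0X.
elim/Ppointed: U' => U' in B' *.
  by rewrite empty_eq0 => _ /card_le0P->; rewrite setX0.
move=> /pcard_leP[f] /pcard_leP[g].
apply: (card_le_injon (fun p => (f p.1, g p.2))).
  by move=> [x x'] [/= Ax Ax']; split; apply: funS.
move=> [x x'] [y y'] /[!inE] -[/= Ax Ax'] [/= Ay Ay'] [fxy gxy].
by rewrite (inj (mem_set Ax) (mem_set Ay) fxy)
  (inj (mem_set Ax') (mem_set Ay') gxy).
Qed.

Lemma infinite_set_two_points T (A : set T) :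
  infinite_set A -> exists a b, [/\ A a, A b & a <> b].
Proof.
elim/Ppointed: T => T in A *; first by rewrite empty_eq0 => /(_ (finite_set0 T)).
move=> /infiniteP/pcard_leP[f]; exists (f 0%N), (f 1%N).
split; [exact: funS|exact: funS|].
by move=> /(inj (mem_set (I : setT 0%N)) (mem_set (I : setT 1%N))).
Qed.

Lemma card_eqT_bijective T U :
  [set: T] #= [set: U] -> exists f : T -> U, bijective f.
Proof.
move=> /card_bijP[f [g fK gK]].
pose inT V (v : V) : [set: V] := SigSub (mem_set (I : setT v)).
have inTK V (v : [set: V]) : inT V (val v) = v by apply: val_inj.
exists (fun t => val (f (inT T t))); exists (fun u => val (g (inT U u))).
- by move=> t; rewrite inTK fK.
- by move=> u; rewrite inTK gK.
Qed.

Lemma card_le_wf_total (P T : Type) (R : P -> P -> Prop) (D : set P) (Y : set T) :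
  well_founded R -> (forall p q, p <> q -> R p q \/ R q p) ->
  (forall p, D p -> ~ (Y #<= [set q | R q p])) -> D #<= Y.
Proof.
move=> Rwf Rtotal Ybig; elim/Ppointed: T => T in Y Ybig *.
  suff -> : D = set0 by [].
  apply/seteqP; split=> // p Dp; apply: (Ybig p Dp).
  by rewrite empty_eq0; apply: card_ge0.
(* Greedy recursion: h p avoids every earlier value h q (R q p); such a point
   of Y exists whenever Y is not dominated by the R-predecessors of p. *)
pose fresh p (rec : forall q, R q p -> T) :=
  get [set y | Y y /\ forall q (Rqp : R q p), rec q Rqp <> y].
pose h := Fix Rwf (fun=> T) fresh.
pose fresh_for p := [set y | Y y /\ forall q, R q p -> h q <> y].
have hE p : h p = get (fresh_for p).
  rewrite /h Fix_eq // => {}p f g fg; rewrite /fresh (_ : f = g) //.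
  by do 2 apply: functional_extensionality_dep => ?; apply: fg.
have hP p : D p -> Y (h p) /\ forall q, R q p -> h q <> h p.
  move=> Dp; rewrite [h p]hE; apply: (@getPex _ (fresh_for p)).
  apply: contrapT => nofresh.
  apply: (Ybig p Dp); apply: card_le_trans (card_image_le h [set q | R q p]).
  apply: subset_card_le => y Yy; apply: contrapT => yfresh.
  by apply: nofresh; exists y; split=> // q Rqp hqy; apply: yfresh; exists q.
apply: (card_le_injon h) => [p /hP[]//|p q /[!inE] Dp Dq hpq].
apply: contrapT => /Rtotal[Rpq|Rqp].
- exact: (proj2 (hP q Dq) p Rpq).
- exact: (proj2 (hP p Dp) q Rqp).
Qed.

Section Hessenberg.
Variables (K : Type) (lt : K -> K -> Prop).
Hypotheses (lt_trans : forall x y z, lt x y -> lt y z -> lt x z)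
  (lt_total : forall x y, [\/ lt x y, x = y | lt y x]) (lt_wf : well_founded lt).

Definition segment x := [set y | lt y x].
Definition closed_segment x := segment x `|` [set x].

Definition pmax (p : K * K) := if pselect (lt p.1 p.2) then p.2 else p.1.

Definition godel_lt (p q : K * K) := lt (pmax p) (pmax q) \/
  (pmax p = pmax q /\ (lt p.1 q.1 \/ (p.1 = q.1 /\ lt p.2 q.2))).

Lemma closed_segment_trans x y z :
  closed_segment y x -> closed_segment z y -> closed_segment z x.
Proof.
by move=> [xy|->] [yz|<-]; [left; apply: lt_trans xy yz|left|left|right].
Qed.

Lemma pmax_ge p : closed_segment (pmax p) p.1 /\ closed_segment (pmax p) p.2.
Proof.
case: p => a b; rewrite /pmax /=.
case: pselect => [ab|nab] /=; first by split; [left|right].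
by split; [right|case: (lt_total a b) => [//|->|]; [right|left]].
Qed.

Lemma pmax_in p : pmax p = p.1 \/ pmax p = p.2.
Proof. by rewrite /pmax; case: pselect; [right|left]. Qed.

Lemma godel_lt_wf : well_founded godel_lt.
Proof.
suff acc m a b : pmax (a, b) = m -> Acc godel_lt (a, b) by move=> [a b]; apply: acc.
elim/(well_founded_ind lt_wf): m a b => m IHm a.
elim/(well_founded_ind lt_wf): a => a IHa b.
elim/(well_founded_ind lt_wf): b => b IHb abm.
constructor => -[c d] [cdm|[cdm [/= ca|[/= ca db]]]].
- by apply: (IHm (pmax (c, d))); rewrite -?abm.
- by apply: IHa; rewrite ?cdm.
- by rewrite ca in cdm *; apply: IHb; rewrite ?cdm.
Qed.

Lemma godel_lt_total p q : p <> q -> godel_lt p q \/ godel_lt q p.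
Proof.
move=> pq; rewrite /godel_lt.
case: (lt_total (pmax p) (pmax q)) => [|pqm|]; [by left; left| |by right; left].
case: (lt_total p.1 q.1) => [|pq1|];
  [by left; right; split => //; left| |by right; right; split => //; left].
case: (lt_total p.2 q.2) => [|pq2|].
- by left; right; split => //; right.
- by case: pq; case: p q pq1 pq2 {pqm} => ? ? [? ?] /= -> ->.
- by right; right; split => //; right.
Qed.

Lemma godel_lt_sub p :
  [set q | godel_lt q p] `<=` closed_segment (pmax p) `*` closed_segment (pmax p).
Proof.
move=> q qp; have [q1 q2] := pmax_ge q.
have qpm : closed_segment (pmax p) (pmax q) by case: qp => [|[->]]; [left|right].
by split; apply: closed_segment_trans qpm.
Qed.

Lemma card_setXX_le (X : set K) :
  (forall m, X m -> ~ (X #<= closed_segment m `*` closed_segment m)) ->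
  X `*` X #<= X.
Proof.
move=> Xbig; apply: card_le_wf_total godel_lt_wf godel_lt_total _ => p [Xp1 Xp2] le.
have Xm : X (pmax p) by case: (pmax_in p) => ->.
apply: (Xbig _ Xm); apply: card_le_trans le _.
by apply: subset_card_le; apply: godel_lt_sub.
Qed.

Lemma card_closed_segment_le m : infinite_set (segment m) ->
  segment m `*` segment m #<= segment m -> closed_segment m #<= segment m.
Proof.
move=> /infinite_set_two_points[a [b [ma mb ab]]] sqm.
apply: card_le_trans sqm.
apply: (card_le_injon (fun y => if pselect (y = m) then (a, b) else (y, a))).
  move=> y my; case: pselect => [_|ym] /=; first by split.
  by split=> //; case: my.
move=> y z _ _; case: pselect => [ym|ym] /=; case: pselect => [zm|zm] /=.
- by rewrite ym zm.
- by case=> _ ba; case: ab.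
- by case=> _ ab'; case: ab.
- by case.
Qed.

Lemma not_card_le_closed_square m (X : set K) :
  (infinite_set (segment m) -> segment m `*` segment m #<= segment m) ->
  infinite_set X -> ~ (X #<= segment m) ->
  ~ (X #<= closed_segment m `*` closed_segment m).
Proof.
move=> sqm Xinf Xm le; have [fin|inf] := pselect (finite_set (segment m)).
  apply: Xinf; apply: card_le_finite le _.
  have cmfin : finite_set (closed_segment m) by rewrite /closed_segment finite_setU.
  exact: finite_setX.
have cm := card_closed_segment_le inf (sqm inf).
apply: Xm; apply: card_le_trans le _.
exact: card_le_trans (card_le_setX cm cm) (sqm inf).
Qed.

Lemma card_segment_square x : infinite_set (segment x) ->
  segment x `*` segment x #<= segment x.
Proof.
elim/(well_founded_ind lt_wf): x => x IHx xinf.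
have [[y [yx xy]]|xinitial] :=
  pselect (exists y, lt y x /\ segment x #<= segment y).
  have yinf : infinite_set (segment y) by move/(card_le_finite xy).
  apply: card_le_trans (card_le_setX xy xy) _.
  apply: card_le_trans (IHx y yx yinf) _.
  by apply: subset_card_le => z zy; apply: lt_trans zy yx.
apply: card_setXX_le => m mx.
apply: not_card_le_closed_square (IHx m mx) xinf _ => xm.
by apply: xinitial; exists m.
Qed.

Lemma card_setXT : initial_ordinal lt -> infinite_set [set: K] ->
  [set: K * K] #= [set: K].
Proof.
move=> Kinitial Kinf; apply: Cantor_Bernstein.
  rewrite -setXTT; apply: card_setXX_le => m _.
  exact: not_card_le_closed_square (@card_segment_square m) Kinf (Kinitial m).
by apply: (card_le_injon (fun k => (k, k))) => // x y _ _ [].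
Qed.

End Hessenberg.

Lemma card_bool_setXT K : infinite_set [set: K] ->
  [set: K * K] #= [set: K] -> [set: bool * K] #= [set: K].
Proof.
move=> /infinite_set_two_points[a [b [_ _ ab]]] KK; apply: Cantor_Bernstein.
  have bool_le_K : [set: bool] #<= [set: K].
    apply: (card_le_injon (fun c : bool => if c then a else b)) => //.
    by move=> [] [] _ _ //= /esym.
  rewrite -setXTT; apply: card_le_trans (card_le_setX bool_le_K (card_lexx _)) _.
  by rewrite setXTT; case/card_eqPle: KK.
by apply: (card_le_injon (pair true)) => // x y _ _ [].
Qed.

Section GeneratedTopology.
Variables (X : Type) (S : set (set X)).

Lemma is_topology_generated : is_topology (generated_topology S).
Proof.
split=> [O [] //|U V OU OV O Otop SO|F FO O Otop SO].
- by case: (Otop) => _ OI _; apply: OI; [apply: OU|apply: OV].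
- by case: (Otop) => _ _ OU; apply: OU => U /FO; apply.
Qed.

Lemma sub_generated_topology : S `<=` generated_topology S.
Proof. by move=> U SU O _; apply. Qed.

Lemma generated_topology_nbhs (U : set X) :
  (forall x, U x -> exists2 V, S V & V x /\ V `<=` U) -> generated_topology S U.
Proof.
move=> Unbhs; have -> : U = \bigcup_(V in [set V | S V /\ V `<=` U]) V.
  apply/seteqP; split=> [x /Unbhs[V SV [Vx VU]]|x [V [_ VU] /VU //]].
  by exists V.
have [_ _ OU] := is_topology_generated; apply: OU => V [SV _].
exact: sub_generated_topology.
Qed.

Lemma continuous_wrt_generated (Y : Type) (OY : set (set Y)) (f : Y -> X) :
  is_topology OY -> (forall V, S V -> OY (f @^-1` V)) ->
  continuous_wrt OY (generated_topology S) f.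
Proof.
move=> [OT OI OU] fS V SV; apply: (SV [set V | OY (f @^-1` V)]) => //.
split=> //= [U W|F FO]; first by rewrite preimage_setI; apply: OI.
rewrite preimage_bigcup -(bigcup_image F (preimage f) id).
by apply: OU => _ [W FW <-]; apply: FO.
Qed.
End GeneratedTopology.

Lemma continuous_wrt_pair (X Y Z : Type) (OX : set (set X)) (OY : set (set Y))
    (OZ : set (set Z)) (f : X -> Y) (g : X -> Z) :
  is_topology OX -> continuous_wrt OX OY f -> continuous_wrt OX OZ g ->
  continuous_wrt OX (product_topology OY OZ) (fun x => (f x, g x)).
Proof.
move=> OXtop fc gc; apply: continuous_wrt_generated => // _ [U [V [OU OV ->]]].
by case: OXtop => _ OI _; apply: OI (fc _ OU) (gc _ OV).
Qed.

Section TauI.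
Variables (K : Type) (I : set (set K)).

Lemma continuous_tauI_comp (A C : Type) (phi : C -> A) :
  continuous_wrt (tauI C I) (tauI A I) (fun z a => phi (z a)).
Proof.
apply: continuous_wrt_generated; first exact: is_topology_generated.
move=> _ [D [h [ID ->]]]; apply: generated_topology_nbhs => z zh.
exists (Nset D z); first by exists D, z.
by split=> // z' z'z a Da /=; rewrite z'z //; apply: zh.
Qed.

Lemma continuous_tauI_pair (A B C : Type) (phi : A * B -> C) :
  continuous_wrt (product_topology (tauI A I) (tauI B I)) (tauI C I)
    (fun xy a => phi (xy.1 a, xy.2 a)).
Proof.
apply: continuous_wrt_generated; first exact: is_topology_generated.
move=> _ [D [h [ID ->]]]; apply: generated_topology_nbhs => -[x y] xyh.
exists (Nset D x `*` Nset D y).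
  exists (Nset D x), (Nset D y).
  by split=> //; apply: sub_generated_topology; [exists D, x|exists D, y].
by split=> // -[x' y'] [/= x'x y'y] a Da /=; rewrite x'x ?y'y //; apply: xyh.
Qed.

Lemma homeomorphic_tauI_prod (A B C : Type) (e : A * B -> C) : bijective e ->
  homeomorphic (product_topology (tauI A I) (tauI B I)) (tauI C I).
Proof.
case=> e' eK e'K.
exists (fun xy a => e (xy.1 a, xy.2 a)).
exists (fun z => (fun a => (e' (z a)).1, fun a => (e' (z a)).2)).
split.
- by move=> [x y]; congr pair; apply/funext => a /=; rewrite eK.
- by move=> z; apply/funext => a /=; rewrite -surjective_pairing e'K.
- exact: continuous_tauI_pair.
- apply: continuous_wrt_pair; first exact: is_topology_generated.
  + exact: (continuous_tauI_comp (fst \o e')).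
  + exact: (continuous_tauI_comp (snd \o e')).
Qed.

End TauI.

Theorem proposition2p6 (K : Type) (lt : K -> K -> Prop) (I : set (set K)) :
  uncountable_regular_cardinal lt ->
  proper_ideal I -> kappa_complete I -> contains_bounded lt I ->
  homeomorphic (product_topology (tauI bool I) (tauI K I)) (tauI K I) /\
  homeomorphic (product_topology (tauI K I) (tauI K I)) (tauI K I).
Proof.
move=> [[_ lt_trans lt_total lt_wf] Kinitial _ Kuncountable] _ _ _.
have Kinf : infinite_set [set: K] by move/finite_set_countable.
have KK := card_setXT lt_trans lt_total lt_wf Kinitial Kinf.
have [e ebij] := card_eqT_bijective (card_bool_setXT Kinf KK).
have [e' e'bij] := card_eqT_bijective KK.
by split; [apply: homeomorphic_tauI_prod ebij|apply: homeomorphic_tauI_prod e'bij].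
Qed.
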